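(* Let $n\ge 1$, let $Q$ be an $n$-state 1gQFA over a finite alphabet $\Sigma$, and let $\lambda\in[0,1)$. Then there exist a one-way PFA $P$ over $\Sigma$ with at most $2n^2+6$ states and a strict cutpoint $\mu\in[0,1)$ such that $L(P,\mu)=L(Q,\lambda)$. In particular, the cost of strict-cutpoint simulation of $n$-state 1gQFA by PFA is $O(n^2)$ states.
   Context: Let $\Sigma$ be a finite alphabet and $\Sigma^\ast$ the set of finite words over it. Probabilistic computations are written with row vectors; stochastic matrices act on the right. A one-way PFA (probabilistic finite automaton, end-marker model) over $\Sigma$ is a tuple $P=(S,\Sigma,\pi,\{P_\sigma\}_{\sigma\in\Sigma},P_{\#},F)$, where $S$ is a finite state set (its number of states is $|S|$), $\pi$ is an initial probability distribution (row vector) on $S$, each $P_\sigma$ and $P_\#$ are row-stochastic $|S|\times|S|$ matrices, and $F\subseteq S$. For $w=\sigma_1\cdots\sigma_m$, $f_P(w)=\pi P_{\sigma_1}\cdots P_{\sigma_m}P_\#\mathbf 1_F$, where $\mathbf 1_F$ is the indicator column vector of $F$. For $\mu\in[0,1)$, $L(P,\mu)=\{w\in\Sigma^\ast: f_P(w)>\mu\}$. An $n$-state 1gQFA (measure-once one-way general quantum finite automaton) over $\Sigma$ is a tuple $Q=(\mathcal H,\Sigma,\rho_0,\{\mathcal E_\sigma\}_{\sigma\in\Sigma},P_{\mathrm{acc}})$ where $\mathcal H\cong\mathbb C^n$, $\rho_0$ is a density operator on $\mathcal H$, each $\mathcal E_\sigma$ is a completely positive trace-preserving map on the operators on $\mathcal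 H$, and $P_{\mathrm{acc}}$ is an orthogonal projector on $\mathcal H$. For $w=\sigma_1\cdots\sigma_m$, $\rho_w=\mathcal E_{\sigma_m}\circ\cdots\circ\mathcal E_{\sigma_1}(\rho_0)$ and $f_Q(w)=\operatorname{Tr}(P_{\mathrm{acc}}\rho_w)$. For $\lambda\in[0,1)$, $L(Q,\lambda)=\{w\in\Sigma^\ast: f_Q(w)>\lambda\}$. *)

From HB Require Import structures.
From mathcomp Require Import all_boot all_order all_algebra.
From mathcomp Require Import complex reals.
Set Implicit Arguments. Unset Strict Implicit. Unset Printing Implicit Defensive.
Import Order.TTheory GRing.Theory Num.Theory.
Local Open Scope ring_scope.

Section Defs.
Variable R : realType.
Local Notation C := R[i].

Definition psdf (I : finType) (A : I -> I -> C) : Prop :=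
  (forall i j, A j i = (A i j)^*) /\
  (forall v : I -> C, 0 <= \sum_i \sum_j (v i)^* * A i j * v j).

Definition psdmx (n : nat) (A : 'M[C]_n) : Prop := psdf (fun i j => A i j).

Definition adjmx (n : nat) (A : 'M[C]_n) : 'M[C]_n := \matrix_(i, j) (A j i)^*.

Definition density (n : nat) (rho : 'M[C]_n) : Prop := psdmx rho /\ \tr rho = 1.

Definition orth_proj (n : nat) (P : 'M[C]_n) : Prop := P *m P = P /\ adjmx P = P.

Definition linear_map (n : nat) (E : 'M[C]_n -> 'M[C]_n) : Prop :=
  forall (a : C) (X Y : 'M[C]_n), E (a *: X + Y) = a *: E X + E Y.

(* complete positivity: for every k, id_k (x) E maps PSD block matrices
   (k x k blocks of n x n matrices, indexed by 'I_k * 'I_n) to PSD ones. *)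
Definition completely_positive (n : nat) (E : 'M[C]_n -> 'M[C]_n) : Prop :=
  forall (k : nat) (X : 'I_k -> 'I_k -> 'M[C]_n),
    psdf (fun p q : 'I_k * 'I_n => X p.1 q.1 p.2 q.2) ->
    psdf (fun p q : 'I_k * 'I_n => E (X p.1 q.1) p.2 q.2).

Definition trace_preserving (n : nat) (E : 'M[C]_n -> 'M[C]_n) : Prop :=
  forall X : 'M[C]_n, \tr (E X) = \tr X.

Definition CPTP (n : nat) (E : 'M[C]_n -> 'M[C]_n) : Prop :=
  [/\ linear_map E, completely_positive E & trace_preserving E].

Record gqfa (Sigma : finType) (n : nat) := GQFA {
  q_rho0 : 'M[C]_n;
  q_E : Sigma -> 'M[C]_n -> 'M[C]_n;
  q_Pacc : 'M[C]_n;
  q_rho0_density : density q_rho0;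
  q_E_cptp : forall s, CPTP (q_E s);
  q_Pacc_proj : orth_proj q_Pacc
}.

Definition gqfa_state (Sigma : finType) (n : nat) (Q : gqfa Sigma n)
  (w : seq Sigma) : 'M[C]_n := foldl (fun rho s => q_E Q s rho) (q_rho0 Q) w.

Definition f_Q (Sigma : finType) (n : nat) (Q : gqfa Sigma n) (w : seq Sigma) : C :=
  \tr (q_Pacc Q *m gqfa_state Q w).

Definition distribution (m : nat) (pi : 'rV[R]_m) : Prop :=
  (forall i, 0 <= pi 0 i) /\ \sum_i pi 0 i = 1.

Definition row_stochastic (m : nat) (M : 'M[R]_m) : Prop :=
  (forall i j, 0 <= M i j) /\ (forall i, \sum_j M i j = 1).

Record pfa (Sigma : finType) (m : nat) := PFA {
  p_pi : 'rV[R]_m;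
  p_P : Sigma -> 'M[R]_m;
  p_end : 'M[R]_m;
  p_F : {set 'I_m};
  p_pi_distr : distribution p_pi;
  p_P_stoch : forall s, row_stochastic (p_P s);
  p_end_stoch : row_stochastic p_end
}.

Definition f_P (Sigma : finType) (m : nat) (P : pfa Sigma m) (w : seq Sigma) : R :=
  (foldl (fun v s => v *m p_P P s) (p_pi P) w *m p_end P
     *m \col_i (i \in p_F P)%:R) 0 0.

End Defs.

Definition lang_P (R : realType) (Sigma : finType) (m : nat) (P : pfa R Sigma m) (mu : R)
  : seq Sigma -> Prop := fun w => mu < f_P P w.

Definition lang_Q (R : realType) (Sigma : finType) (n : nat) (Q : gqfa R Sigma n) (lam : R)
  : seq Sigma -> Prop := fun w => (lam%:C)%C < f_Q Q w.

(* Writing operators in real coordinates (real and imaginary parts of their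
   entries), every CPTP map becomes a real 2n^2 x 2n^2 matrix and
   rho |-> Tr (P_acc rho) a real linear form, so f_Q is computed by a real
   linear representation on 2n^2 states; one more state subtracts the
   cutpoint lambda.  Turakainen's construction turns any real linear
   representation g into a PFA with two more states: border the matrices so
   that all their row and column sums vanish, then mix them affinely with the
   uniform stochastic matrix.  The resulting PFA computes c_w g(w) + 1/2 with
   c_w > 0, hence exceeds 1/2 exactly when g(w) > 0.  As
   f_Q(w) = Tr (P_acc rho_w) >= 0 is real, g(w) = f_Q(w) - lambda > 0 is the
   acceptance condition of Q, and the PFA has 2n^2 + 3 states. *)

From HB Require Import structures.
From mathcomp Require Import all_boot all_order all_algebra.
From mathcomp Require Import complex reals.
From mathcomp Require Import ring lra zify.
Set Implicit Arguments. Unset Strict Implicit. Unset Printing Implicit Defensive.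
Import Order.TTheory GRing.Theory Num.Theory.
Local Open Scope ring_scope.

Lemma big_option (R : Type) (idx : R) (op : Monoid.com_law idx) (T : finType)
    (F : option T -> R) :
  \big[op/idx]_x F x = op (F None) (\big[op/idx]_y F (Some y)).
Proof.
rewrite (bigD1 None) //=; congr (op _ _).
rewrite (reindex_omap Some id); last by case.
by apply: eq_bigl => y; rewrite /= eqxx.
Qed.

Lemma sumr_indicator (R : pzRingType) (T : finType) (F : T -> R) (k : T) :
  \sum_j F j * (j == k)%:R = F k.
Proof.
rewrite (bigD1 k) //= eqxx mulr1 big1 ?addr0 // => j /negbTE->.
by rewrite mulr0.
Qed.

Section AbsBound.
Variables (R : realDomainType) (I : finType) (f : I -> R).

Definition abs_bound : R := 1 + \sum_i `|f i|.

Lemma abs_bound_gt0 : 0 < abs_bound.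
Proof. have : 0 <= \sum_i `|f i| by apply: sumr_ge0. rewrite /abs_bound; lra. Qed.

Lemma ler_abs_bound i : `|f i| <= abs_bound.
Proof.
rewrite /abs_bound (bigD1 i) //=.
have : 0 <= \sum_(j | j != i) `|f j| by apply: sumr_ge0.
lra.
Qed.

End AbsBound.

Lemma affine_ge0 (R : realFieldType) (z c d : R) :
  `|z| <= c -> 0 < c -> 0 < d -> 0 <= z / (c * d) + d^-1.
Proof.
rewrite ler_norml => /andP[zc _] c_gt0 d_gt0.
have -> : z / (c * d) + d^-1 = (z + c) / (c * d) by field; rewrite !gt_eqF.
by apply: divr_ge0; [lra | rewrite mulr_ge0 // ltW].
Qed.

Lemma affine_half_le1 (R : realFieldType) (z c : R) :
  `|z| <= c -> 0 < c -> z / (c * 2) + 2^-1 <= 1.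
Proof.
rewrite ler_norml => /andP[_ zc] c_gt0.
have -> : z / (c * 2) + 2^-1 = (z + c) / (c * 2) by field; rewrite gt_eqF.
by rewrite ler_pdivrMr ?mulr_gt0 //; lra.
Qed.

Section LinearRepresentation.
Variables (R : pzRingType) (Sigma T : finType).
Implicit Types (A : Sigma -> T -> T -> R) (a b : T -> R) (w : seq Sigma).

Definition rep_vec A a w : T -> R :=
  foldl (fun u s y => \sum_x u x * A s x y) a w.

Definition rep_val A a b w : R := \sum_x rep_vec A a w x * b x.

Lemma rep_vec_rcons A a w s y :
  rep_vec A a (rcons w s) y = \sum_x rep_vec A a w x * A s x y.
Proof. by rewrite /rep_vec foldl_rcons. Qed.

End LinearRepresentation.

Section Shift.
Variables (R : pzRingType) (Sigma T : finType).
Variables (A : Sigma -> T -> T -> R) (a b : T -> R) (c : R).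

Definition shift_mx s (x y : option T) : R :=
  match x, y with
  | None, None => 1
  | Some i, Some j => A s i j
  | _, _ => 0
  end.

Definition shift_init (x : option T) : R := if x is Some i then a i else 1.

Definition shift_final (x : option T) : R := if x is Some i then b i else c.

Lemma rep_vec_shift w x :
  rep_vec shift_mx shift_init w x = if x is Some i then rep_vec A a w i else 1.
Proof.
elim/last_ind: w x => [|w s IH] [j|] //; rewrite rep_vec_rcons big_option IH /=.
- by rewrite mulr0 add0r rep_vec_rcons; apply: eq_bigr => i _; rewrite IH.
- by rewrite mulr1 big1 ?addr0 // => i _; rewrite mulr0.
Qed.

Lemma rep_val_shift w :
  rep_val shift_mx shift_init shift_final w = rep_val A a b w + c.
Proof.
rewrite /rep_val big_option rep_vec_shift mul1r addrC /=.
by congr (_ + _); apply: eq_bigr => i _; rewrite rep_vec_shift.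
Qed.

End Shift.

Section ZeroSumAugmentation.
Variables (R : pzRingType) (Sigma T : finType).
Variables (A : Sigma -> T -> T -> R) (a b : T -> R).
Local Notation T2 := (option (option T)).

Definition zerosum_mx s (x y : T2) : R :=
  match x, y with
  | None, Some None => \sum_i \sum_j A s i j
  | None, Some (Some j) => - \sum_i A s i j
  | Some (Some i), Some None => - \sum_j A s i j
  | Some (Some i), Some (Some j) => A s i j
  | _, _ => 0
  end.

Definition zerosum_init (x : T2) : R :=
  match x with None => 0 | Some None => - \sum_i a i | Some (Some i) => a i end.

Definition zerosum_final (x : T2) : R :=
  match x with None => - \sum_i b i | Some None => 0 | Some (Some i) => b i end.

Lemma zerosum_mx_row s x : \sum_y zerosum_mx s x y = 0.
Proof.
rewrite !big_option; case: x => [[i|]|] /=.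
- by rewrite add0r addNr.
- by rewrite !add0r big1.
- by rewrite add0r sumrN exchange_big addrN.
Qed.

Lemma zerosum_mx_col s y : \sum_x zerosum_mx s x y = 0.
Proof.
rewrite !big_option; case: y => [[j|]|] /=.
- by rewrite add0r addNr.
- by rewrite add0r sumrN addrN.
- by rewrite !add0r big1 // => -[].
Qed.

Lemma zerosum_init_sum : \sum_x zerosum_init x = 0.
Proof. by rewrite !big_option /= add0r addNr. Qed.

Lemma zerosum_final_sum : \sum_x zerosum_final x = 0.
Proof. by rewrite !big_option /= add0r addNr. Qed.

Lemma rep_vec_zerosum w :
  rep_vec zerosum_mx zerosum_init w None = 0 /\
  forall i, rep_vec zerosum_mx zerosum_init w (Some (Some i)) = rep_vec A a w i.
Proof.
elim/last_ind: w => [|w s [IH0 IH]] //; split.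
  by rewrite rep_vec_rcons big1 // => -[[i|]|]; rewrite /= mulr0.
move=> j; rewrite !rep_vec_rcons !big_option IH0 /= mul0r mulr0 !add0r.
by apply: eq_bigr => i _; rewrite IH.
Qed.

Lemma rep_val_zerosum w :
  rep_val zerosum_mx zerosum_init zerosum_final w = rep_val A a b w.
Proof.
have [zero_None zero_Some] := rep_vec_zerosum w.
rewrite /rep_val !big_option zero_None /= mul0r mulr0 !add0r.
by apply: eq_bigr => i _; rewrite zero_Some.
Qed.

End ZeroSumAugmentation.

Section StochasticNormalization.
Variables (R : realFieldType) (Sigma T : finType).
Variables (B : Sigma -> T -> T -> R) (a b : T -> R).
Hypothesis T_gt0 : (0 < #|T|)%N.
Hypothesis B_row : forall s x, \sum_y B s x y = 0.
Hypothesis B_col : forall s y, \sum_x B s x y = 0.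
Hypothesis a_sum : \sum_x a x = 0.
Hypothesis b_sum : \sum_x b x = 0.

Let N : R := #|{: T}|%:R.
Let cB := abs_bound (fun q : Sigma * T * T => B q.1.1 q.1.2 q.2).
Let ca := abs_bound a.
Let cb := abs_bound b.

Definition stoch_mx s x y := B s x y / (cB * N) + N^-1.
Definition stoch_init x := a x / (ca * N) + N^-1.
Definition stoch_accept x := b x / (cb * 2) + 2^-1.

Let N_gt0 : 0 < N. Proof. by rewrite ltr0n. Qed.

Let sum_const (c : R) : \sum_(x : T) c = N * c.
Proof. by rewrite sumr_const -mulr_natl. Qed.

Let sum_shift (f : T -> R) (k : R) :
  \sum_x f x = 0 -> \sum_x (f x / k + N^-1) = 1.
Proof.
move=> f_sum; rewrite big_split /= -mulr_suml f_sum mul0r add0r.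
by rewrite sum_const divff ?gt_eqF.
Qed.

Lemma stoch_mx_ge0 s x y : 0 <= stoch_mx s x y.
Proof.
by apply: affine_ge0 => //; [exact: (ler_abs_bound _ (s, x, y)) | exact: abs_bound_gt0].
Qed.

Lemma stoch_mx_row s x : \sum_y stoch_mx s x y = 1.
Proof. exact: sum_shift. Qed.

Lemma stoch_init_ge0 x : 0 <= stoch_init x.
Proof. by apply: affine_ge0 => //; [exact: ler_abs_bound | exact: abs_bound_gt0]. Qed.

Lemma stoch_init_sum : \sum_x stoch_init x = 1.
Proof. exact: sum_shift. Qed.

Lemma stoch_accept_ge0 x : 0 <= stoch_accept x.
Proof. by apply: affine_ge0 => //; [exact: ler_abs_bound | exact: abs_bound_gt0]. Qed.

Lemma stoch_accept_le1 x : stoch_accept x <= 1.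
Proof. by apply: affine_half_le1; [exact: ler_abs_bound | exact: abs_bound_gt0]. Qed.

Lemma rep_vec_sum w : \sum_x rep_vec B a w x = 0.
Proof.
elim/last_ind: w => [|w s IH] //.
under eq_bigr do rewrite rep_vec_rcons.
by rewrite exchange_big big1 // => x _; rewrite -mulr_sumr B_row mulr0.
Qed.

(* The columns of [B] and the vectors [rep_vec B a w] sum to zero, so in each
   step the cross terms between the signed and the uniform parts vanish. *)
Lemma rep_vec_stoch w x :
  rep_vec stoch_mx stoch_init w x =
  (cB * N)^-1 ^+ size w / (ca * N) * rep_vec B a w x + N^-1.
Proof.
elim/last_ind: w x => [|w s IH] x; first by rewrite /= expr0 mul1r mulrC.
rewrite !rep_vec_rcons size_rcons.
under eq_bigr => y _ do rewrite IH /stoch_mx.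
set k := (cB * N)^-1 ^+ size w / (ca * N).
transitivity (\sum_y (k * (cB * N)^-1 * (rep_vec B a w y * B s y x)
   + k * N^-1 * rep_vec B a w y + (N^-1 * (cB * N)^-1) * B s y x + N^-1 * N^-1)).
  by apply: eq_bigr => y _; ring.
rewrite !big_split /= -!mulr_sumr rep_vec_sum B_col sum_const.
rewrite !mulr0 !addr0 exprS /k.
by field; rewrite !gt_eqF ?abs_bound_gt0 ?ltr0n.
Qed.

Lemma rep_val_stoch w :
  rep_val stoch_mx stoch_init stoch_accept w =
  (cB * N)^-1 ^+ size w / (ca * N) / (cb * 2) * rep_val B a b w + 2^-1.
Proof.
rewrite /rep_val; under eq_bigr => x _ do rewrite rep_vec_stoch /stoch_accept.
set k := (cB * N)^-1 ^+ size w / (ca * N).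
transitivity (\sum_x (k / (cb * 2) * (rep_vec B a w x * b x)
   + k / 2 * rep_vec B a w x + N^-1 / (cb * 2) * b x + N^-1 / 2)).
  by apply: eq_bigr => x _; ring.
rewrite !big_split /= -!mulr_sumr rep_vec_sum b_sum sum_const.
by rewrite !mulr0 !addr0; field; rewrite !gt_eqF ?abs_bound_gt0 ?ltr0n.
Qed.

Lemma rep_val_stoch_gt_half w :
  (2^-1 < rep_val stoch_mx stoch_init stoch_accept w) = (0 < rep_val B a b w).
Proof.
have scale_gt0 : 0 < (cB * N)^-1 ^+ size w / (ca * N) / (cb * 2).
  by rewrite !(divr_gt0, mulr_gt0, exprn_gt0, invr_gt0, abs_bound_gt0).
by rewrite rep_val_stoch ltrDr pmulr_rgt0.
Qed.

End StochasticNormalization.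

Section PFAOfStochastic.
Variables (R : realType) (Sigma T : finType).
Variables (pi : T -> R) (M : Sigma -> T -> T -> R) (eta : T -> R) (acc rej : T).
Hypothesis pi_ge0 : forall x, 0 <= pi x.
Hypothesis pi_sum : \sum_x pi x = 1.
Hypothesis M_ge0 : forall s x y, 0 <= M s x y.
Hypothesis M_row : forall s x, \sum_y M s x y = 1.
Hypothesis eta_ge0 : forall x, 0 <= eta x.
Hypothesis eta_le1 : forall x, eta x <= 1.
Hypothesis acc_neq_rej : acc != rej.

Local Notation m := #|{: T}|.
Let ev : 'I_m -> T := enum_val.

Let sum_ev (F : T -> R) : \sum_(i < m) F (ev i) = \sum_x F x.
Proof. by rewrite -big_enum_val. Qed.

Let row_stochastic_ev (K : T -> T -> R) :
  (forall x y, 0 <= K x y) -> (forall x, \sum_y K x y = 1) ->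
  row_stochastic (\matrix_(i, j) K (ev i) (ev j) : 'M[R]_m).
Proof.
move=> K_ge0 K_row; split=> [i j|i]; first by rewrite mxE.
by under eq_bigr do rewrite mxE; rewrite sum_ev.
Qed.

Definition end_mx (x y : T) : R :=
  if y == acc then eta x else if y == rej then 1 - eta x else 0.

Lemma end_mx_ge0 x y : 0 <= end_mx x y.
Proof.
rewrite /end_mx; case: ifP => // _; case: ifP => // _.
by rewrite subr_ge0.
Qed.

Lemma end_mx_row x : \sum_y end_mx x y = 1.
Proof.
have rej_neq_acc : rej != acc by rewrite eq_sym.
rewrite (bigD1 acc) // (bigD1 rej) //= big1 => [|y /andP[/negbTE-y_acc /negbTE-y_rej]].
  by rewrite /end_mx eqxx (negbTE rej_neq_acc) eqxx addr0 addrC subrK.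
by rewrite /end_mx y_acc y_rej.
Qed.

Let pi_distribution : distribution (\row_i pi (ev i)).
Proof.
split=> [i|]; first by rewrite mxE.
by under eq_bigr do rewrite mxE; rewrite sum_ev.
Qed.

Definition pfa_of_stoch : pfa R Sigma m :=
  @PFA R Sigma m _ _ _ [set i | ev i == acc] pi_distribution
    (fun s => row_stochastic_ev (M_ge0 s) (M_row s))
    (row_stochastic_ev end_mx_ge0 end_mx_row).

Lemma f_P_pfa_of_stoch w : f_P pfa_of_stoch w = rep_val M pi eta w.
Proof.
have run : foldl (fun v s => v *m p_P pfa_of_stoch s) (p_pi pfa_of_stoch) w =
    \row_i rep_vec M pi w (ev i).
  elim/last_ind: w => [|w s IH] //; rewrite foldl_rcons IH; apply/rowP => j.
  rewrite !mxE rep_vec_rcons -sum_ev; apply: eq_bigr => i _.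
  by rewrite !mxE.
have end_mx_acc x : end_mx x acc = eta x by rewrite /end_mx eqxx.
rewrite /f_P run mxE /rep_val; under [RHS]eq_bigr do rewrite -end_mx_acc.
rewrite -(sumr_indicator (fun y => \sum_x rep_vec M pi w x * end_mx x y)) -sum_ev.
apply: eq_bigr => j _; rewrite !mxE inE; congr (_ * _).
by rewrite -sum_ev; apply: eq_bigr => i _; rewrite !mxE.
Qed.

End PFAOfStochastic.

Theorem pfa_of_real_rep (R : realType) (Sigma T : finType)
    (A : Sigma -> T -> T -> R) (a b : T -> R) :
  exists P : pfa R Sigma #|{: option (option T)}|,
    forall w, (2^-1 < f_P P w) = (0 < rep_val A a b w).
Proof.
have card_gt0 : (0 < #|{: option (option T)}|)%N by rewrite card_option.
have acc_neq_rej : None != Some None :> option (option T) by [].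
exists (pfa_of_stoch (stoch_init_ge0 (zerosum_init a) card_gt0)
  (stoch_init_sum card_gt0 (zerosum_init_sum a))
  (stoch_mx_ge0 (zerosum_mx A) card_gt0) (stoch_mx_row card_gt0 (zerosum_mx_row A))
  (stoch_accept_ge0 (zerosum_final b)) (stoch_accept_le1 (zerosum_final b)) acc_neq_rej).
move=> w; rewrite f_P_pfa_of_stoch rep_val_stoch_gt_half ?rep_val_zerosum
  ?zerosum_init_sum ?zerosum_final_sum //.
- exact: zerosum_mx_row.
- exact: zerosum_mx_col.
Qed.

Section MatrixCoordinates.
Variables (R : realType) (n : nat).
Local Notation C := R[i].
Local Notation Idx := ('I_n * 'I_n * bool)%type.

Lemma Re_mul (x y : C) :
  complex.Re (x * y) = complex.Re x * complex.Re y - complex.Im x * complex.Im y.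
Proof. by case: x; case: y. Qed.

Lemma Im_mul (x y : C) :
  complex.Im (x * y) = complex.Re x * complex.Im y + complex.Im x * complex.Re y.
Proof. by case: x; case: y. Qed.

Lemma sum_Idx (F : Idx -> R) :
  \sum_p F p = \sum_i \sum_j (F (i, j, true) + F (i, j, false)).
Proof.
transitivity (\sum_ij \sum_b F (ij, b)).
  by rewrite pair_bigA; apply: eq_bigr => -[ij b] _.
by rewrite [RHS]pair_bigA; apply: eq_bigr => -[i j] _; rewrite big_bool.
Qed.

Definition mx_coord (X : 'M[C]_n) (p : Idx) : R :=
  if p.2 then complex.Im (X p.1.1 p.1.2) else complex.Re (X p.1.1 p.1.2).

(* Real matrix of [E] on the coordinates [mx_coord]: multiplication by the
   complex number [E (delta_mx i j) k l] acting on (Re, Im) pairs. *)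
Definition coord_mx (E : 'M[C]_n -> 'M[C]_n) (p q : Idx) : R :=
  let z := E (delta_mx p.1.1 p.1.2) q.1.1 q.1.2 in
  match p.2, q.2 with
  | false, false => complex.Re z
  | false, true => complex.Im z
  | true, false => - complex.Im z
  | true, true => complex.Re z
  end.

Lemma linear_map_entry (E : 'M[C]_n -> 'M[C]_n) X k l :
  linear_map E -> E X k l = \sum_i \sum_j X i j * E (delta_mx i j) k l.
Proof.
move=> E_lin.
have E0 : E 0 = 0.
  have := E_lin 1 0 0; rewrite scaler0 add0r scale1r => E0D.
  by apply: (addrI (E 0)); rewrite addr0 -E0D.
have ED Y Z : E (Y + Z) = E Y + E Z by have := E_lin 1 Y Z; rewrite !scale1r.
have EZ c Y : E (c *: Y) = c *: E Y by have := E_lin c Y 0; rewrite !addr0 E0 addr0.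
rewrite {1}(matrix_sum_delta X) (big_morph E ED E0) summxE; apply: eq_bigr => i _.
rewrite (big_morph E ED E0) summxE; apply: eq_bigr => j _.
by rewrite EZ mxE.
Qed.

Lemma mx_coord_linear (E : 'M[C]_n -> 'M[C]_n) X q :
  linear_map E -> mx_coord (E X) q = \sum_p mx_coord X p * coord_mx E p q.
Proof.
move=> E_lin; rewrite sum_Idx; case: q => [[k l] b].
rewrite /mx_coord /= linear_map_entry //.
case: b => /=; rewrite raddf_sum; apply: eq_bigr => i _;
  rewrite raddf_sum; apply: eq_bigr => j _;
  by rewrite /coord_mx /= ?Re_mul ?Im_mul; ring.
Qed.

Definition tr_coord (P : 'M[C]_n) (p : Idx) : R :=
  let z := P p.1.2 p.1.1 in if p.2 then - complex.Im z else complex.Re z.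

Lemma Re_mxtrace_mul (P X : 'M[C]_n) :
  complex.Re (\tr (P *m X)) = \sum_p mx_coord X p * tr_coord P p.
Proof.
rewrite sum_Idx /mxtrace raddf_sum exchange_big /=; apply: eq_bigr => l _.
rewrite mxE raddf_sum; apply: eq_bigr => k _.
by rewrite /mx_coord /tr_coord /= Re_mul; ring.
Qed.

End MatrixCoordinates.

Section Positivity.
Variables (R : realType) (n : nat).
Local Notation C := R[i].

Lemma psdf_block1 (M : 'M[C]_n) :
  psdf (fun p q : 'I_1 * 'I_n => M p.2 q.2) <-> psdmx M.
Proof.
have sum1 (G : 'I_1 * 'I_n -> C) : \sum_p G p = \sum_i G (ord0, i).
  transitivity (\sum_(a < 1) \sum_i G (a, i)); last by rewrite big_ord1.
  by rewrite pair_bigA; apply: eq_bigr => -[a i].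
split=> -[herm pos]; split.
- by move=> i j; exact: (herm (ord0, i) (ord0, j)).
- by move=> v; have := pos (fun p => v p.2); rewrite sum1; under eq_bigr do rewrite sum1.
- by move=> p q; exact: herm.
- move=> v; rewrite sum1; under eq_bigr do rewrite sum1.
  exact: (pos (fun i => v (ord0, i))).
Qed.

Lemma psdmx_completely_positive (E : 'M[C]_n -> 'M[C]_n) (X : 'M[C]_n) :
  completely_positive E -> psdmx X -> psdmx (E X).
Proof.
by move=> E_cp /psdf_block1 X_psd; apply/psdf_block1; exact: (E_cp 1%N (fun _ _ => X)).
Qed.

(* [tr (P X) = tr ((P X) P) = sum_l v_l^* X v_l], with [v_l] the [l]-th column of [P]. *)
Lemma mxtrace_proj_psd_ge0 (P X : 'M[C]_n) :
  orth_proj P -> psdmx X -> 0 <= \tr (P *m X).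
Proof.
move=> [PP adjP] [_ X_pos].
have P_herm i j : (P j i)^* = P i j.
  by have := congr1 (fun M : 'M[C]_n => M i j) adjP; rewrite mxE.
rewrite -PP -mulmxA mxtrace_mulC; apply: sumr_ge0 => l _; rewrite mxE.
have := X_pos (fun m => P m l).
suff -> : \sum_m (P *m X) l m * P m l = \sum_k \sum_m (P k l)^* * X k m * P m l by [].
rewrite exchange_big; apply: eq_bigr => m _; rewrite mxE mulr_suml.
by apply: eq_bigr => k _; rewrite P_herm.
Qed.

End Positivity.

Section GQFARepresentation.
Variables (R : realType) (Sigma : finType) (n : nat) (Q : gqfa R Sigma n).

Lemma gqfa_state_rcons w s : gqfa_state Q (rcons w s) = q_E Q s (gqfa_state Q w).
Proof. by rewrite /gqfa_state foldl_rcons. Qed.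

Lemma gqfa_state_psd w : psdmx (gqfa_state Q w).
Proof.
elim/last_ind: w => [|w s IH]; first by case: (q_rho0_density Q).
rewrite gqfa_state_rcons; case: (q_E_cptp Q s) => _ E_cp _.
exact: psdmx_completely_positive.
Qed.

Lemma f_Q_ge0 w : 0 <= f_Q Q w.
Proof. exact: mxtrace_proj_psd_ge0 (q_Pacc_proj Q) (gqfa_state_psd w). Qed.

Lemma rep_vec_gqfa w p :
  rep_vec (fun s => coord_mx (q_E Q s)) (mx_coord (q_rho0 Q)) w p =
  mx_coord (gqfa_state Q w) p.
Proof.
elim/last_ind: w p => [|w s IH] p //.
rewrite rep_vec_rcons gqfa_state_rcons mx_coord_linear; last by case: (q_E_cptp Q s).
by apply: eq_bigr => q _; rewrite IH.
Qed.

Lemma rep_val_gqfa w :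
  rep_val (fun s => coord_mx (q_E Q s)) (mx_coord (q_rho0 Q)) (tr_coord (q_Pacc Q)) w =
  complex.Re (f_Q Q w).
Proof. by rewrite /f_Q Re_mxtrace_mul; apply: eq_bigr => p _; rewrite rep_vec_gqfa. Qed.

End GQFARepresentation.

Theorem corollary3p3 (R : realType) (Sigma : finType) (n : nat)
  (Q : gqfa R Sigma n) (lam : R) :
  (1 <= n)%N -> 0 <= lam < 1 ->
  exists (m : nat) (P : pfa R Sigma m) (mu : R),
    [/\ (m <= 2 * n ^ 2 + 6)%N, 0 <= mu < 1 &
        forall w : seq Sigma, lang_P P mu w <-> lang_Q Q lam w].
Proof.
move=> _ _.
pose A s := coord_mx (q_E Q s).
have [P P_sign] := pfa_of_real_rep (shift_mx A) (shift_init (mx_coord (q_rho0 Q)))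
  (shift_final (tr_coord (q_Pacc Q)) (- lam)).
exists _, P, 2^-1; split.
- by rewrite !card_option !card_prod !card_ord card_bool; lia.
- lra.
move=> w; rewrite /lang_P /lang_Q P_sign rep_val_shift rep_val_gqfa subr_gt0.
by rewrite ltcE /= (ger0_Im (f_Q_ge0 Q w)) eqxx.
Qed.
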